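(* Let $k$ be a field of characteristic $p>0$ and $A$ an infinite-dimensional $k$-vector space. For every $r\ge0$, $S_{\le r}A\neq SA$.
   Context: $SA=\bigoplus_{m\ge0}S^mA$ is the symmetric algebra of $A$ ($S^0A=k$, $S^mA$ the $m$-th symmetric power, with pure symmetric tensors $a_1\otimes_s\dots\otimes_s a_m$). The linear map $\partial\colon SA\to SA\otimes A$ is given by $\partial(\lambda)=0$ for $\lambda\in S^0A$ and $\partial(a_1\otimes_s\dots\otimes_s a_m)=\sum_{i=1}^m(a_1\otimes_s\dots\otimes_s a_{i-1}\otimes_s a_{i+1}\otimes_s\dots\otimes_s a_m)\otimes a_i$. Iterates: $\partial^0=1_{SA}$ and $\partial^{r+1}:=\partial;(\partial^r\otimes 1_A)\colon SA\to SA\otimes A^{\otimes(r+1)}$. Define $S_{\le r}A:=\ker(\partial^{r+1})\subseteq SA$. *)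

From HB Require Import structures.
From mathcomp Require Import all_boot all_order all_algebra.
Set Implicit Arguments. Unset Strict Implicit. Unset Printing Implicit Defensive.
Import GRing.Theory.
Local Open Scope ring_scope.

(* Symmetric algebra SA and the spaces SA (x) A^{(x)n} of an arbitrary
   k-vector space A, presented by generators and relations:
   a pure tensor (a_1 (x)_s ... (x)_s a_m) (x) (b_1 (x) ... (x) b_n) is the key
   ([:: a_1; ...; a_m], [:: b_1; ...; b_n]); a formal sum is a finite list of
   (coefficient, key).  A formal sum is zero in
   \bigoplus_m S^m A (x) A^{(x)n} iff it lies in the span (in the free vector
   space on keys) of the multilinearity relations in every slot and of the
   symmetry relations (adjacent transpositions) in the symmetric slots. *)

Section SymAlg.
Variables (k : fieldType) (A : lmodType k).

Definition key := (seq A * seq A)%type.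
Definition fsum := seq (k * key).

Definition coeff (t : fsum) (x : key) : k :=
  \sum_(q <- t) (if q.2 == x then q.1 else 0).

Inductive tensor_rel : fsum -> Prop :=
| rel_sym_add u v w (a b : A) :
    tensor_rel [:: (1, (u ++ (a + b) :: v, w)); (-1, (u ++ a :: v, w));
                   (-1, (u ++ b :: v, w))]
| rel_sym_scale u v w (d : k) (a : A) :
    tensor_rel [:: (1, (u ++ (d *: a) :: v, w)); (- d, (u ++ a :: v, w))]
| rel_sym_swap u v w (a b : A) :
    tensor_rel [:: (1, (u ++ a :: b :: v, w)); (-1, (u ++ b :: a :: v, w))]
| rel_ten_add m u v (a b : A) :
    tensor_rel [:: (1, (m, u ++ (a + b) :: v)); (-1, (m, u ++ a :: v));
                   (-1, (m, u ++ b :: v))]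
| rel_ten_scale m u v (d : k) (a : A) :
    tensor_rel [:: (1, (m, u ++ (d *: a) :: v)); (- d, (m, u ++ a :: v))].

Definition null (t : fsum) : Prop :=
  exists gs : seq (k * fsum),
    (forall g, g \in gs -> tensor_rel g.2) /\
    forall x, coeff t x = \sum_(g <- gs) g.1 * coeff g.2 x.

Definition sym_elt := seq (k * seq A).

Definition drop_at (m : seq A) (i : nat) := take i m ++ drop i.+1 m.

(* \partial^r on a pure symmetric tensor m, following
   \partial^0 = 1, \partial^{r+1} = \partial ; (\partial^r (x) 1_A),
   \partial(a_1..a_m) = \sum_i (a_1..^a_i..a_m) (x) a_i. *)
Fixpoint dpow (r : nat) (m : seq A) : fsum :=
  match r with
  | 0 => [:: (1, (m, [::]))]
  | r'.+1 =>
      flatten [seq [seq (q.1, (q.2.1, rcons q.2.2 (nth 0 m i)))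
                   | q <- dpow r' (drop_at m i)]
              | i <- iota 0 (size m)]
  end.

Definition dpowS (r : nat) (t : sym_elt) : fsum :=
  flatten [seq [seq (q.1 * p.1, p.2) | p <- dpow r q.2] | q <- t].

(* membership in S_{<= r} A = ker \partial^{r+1} *)
Definition S_le (r : nat) (t : sym_elt) : Prop := null (dpowS r.+1 t).

Definition infinite_dim : Prop :=
  ~ exists s : seq A, forall a : A,
      exists c : seq k, a = \sum_(i < size s) c`_i *: s`_i.

End SymAlg.

From HB Require Import structures.
From mathcomp Require Import all_boot all_order all_algebra.
From mathcomp Require Import ring.
From Stdlib Require Import Classical ClassicalEpsilon.
Set Implicit Arguments. Unset Strict Implicit. Unset Printing Implicit Defensive.
Import GRing.Theory.
Local Open Scope ring_scope.

(* Take r+1 linearly independent vectors a_0, ..., a_r and m := a_0 ... a_r in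
   S^{r+1} A.  The component of \partial^{r+1} m in S^0 A (x) A^{(x)(r+1)} is
   \sum_sigma a_sigma(0) (x) ... (x) a_sigma(r).  The form f_0 (x) ... (x) f_r,
   with f_l coordinate forms dual to the a_l, takes the value 1 on it (only the
   identity ordering contributes), yet it kills every multilinearity relation and,
   vanishing off S^0 A, every symmetry relation; so \partial^{r+1} m is not 0.
   Without a basis of A the f_l are only linear on a finite-dimensional subspace:
   the span of an independent family extending a that contains the finitely many
   vectors of a given witness of nullity.  Nothing here depends on the
   characteristic. *)

Section LinearCombinations.
Variables (k : fieldType) (A : lmodType k).
Implicit Types (B : seq A) (c : nat -> k).

Definition lincomb c B : A := \sum_(i < size B) c i *: B`_i.

Definition in_span B x := exists c, x = lincomb c B.

Definition lin_indep B :=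
  forall c, lincomb c B = 0 -> forall i, (i < size B)%N -> c i = 0.

Lemma lincombD c c' B :
  lincomb (fun i => c i + c' i) B = lincomb c B + lincomb c' B.
Proof. by rewrite /lincomb -big_split; apply: eq_bigr => i _; rewrite scalerDl. Qed.

Lemma lincombB c c' B :
  lincomb (fun i => c i - c' i) B = lincomb c B - lincomb c' B.
Proof. by rewrite /lincomb -sumrB; apply: eq_bigr => i _; rewrite scalerBl. Qed.

Lemma lincombZ d c B : lincomb (fun i => d * c i) B = d *: lincomb c B.
Proof. by rewrite /lincomb scaler_sumr; apply: eq_bigr => i _; rewrite scalerA. Qed.

Lemma lincomb_delta B i :
  (i < size B)%N -> lincomb (fun l => (l == i)%:R) B = B`_i.
Proof.
move=> lt_i; rewrite /lincomb (bigD1 (Ordinal lt_i)) //= eqxx scale1r.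
by rewrite big1 ?addr0 // => j; rewrite -val_eqE /= => /negbTE ->; rewrite scale0r.
Qed.

Lemma lincomb_rcons c B x : lincomb c (rcons B x) = lincomb c B + c (size B) *: x.
Proof.
rewrite /lincomb size_rcons big_ord_recr /= nth_rcons ltnn eqxx.
by congr (_ + _); apply: eq_bigr => i _; rewrite nth_rcons ltn_ord.
Qed.

Lemma lincomb_inj B c c' : lin_indep B -> lincomb c B = lincomb c' B ->
  forall i, (i < size B)%N -> c i = c' i.
Proof.
move=> freeB eq_cc' i lt_i; apply/eqP; rewrite -subr_eq0; apply/eqP.
by apply: (freeB (fun i => c i - c' i)) lt_i; rewrite lincombB eq_cc' subrr.
Qed.

Lemma in_span_nth B i : (i < size B)%N -> in_span B B`_i.
Proof. by move=> lt_i; exists (fun l => (l == i)%:R); rewrite lincomb_delta. Qed.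

Lemma in_span_cat B e x : in_span B x -> in_span (B ++ e) x.
Proof.
case=> c ->; exists (fun i => if (i < size B)%N then c i else 0).
rewrite /lincomb size_cat big_split_ord /= [X in _ = _ + X]big1 ?addr0.
  by apply: eq_bigr => i _; rewrite ltn_ord nth_cat ltn_ord.
by move=> i _; rewrite ltnNge leq_addr scale0r.
Qed.

Lemma lin_indep_rcons B x : lin_indep B -> ~ in_span B x -> lin_indep (rcons B x).
Proof.
move=> freeB Nspan_x c; rewrite lincomb_rcons => eq0.
have c_last : c (size B) = 0.
  case: (eqVneq (c (size B)) 0) => [//|nz]; case: Nspan_x.
  exists (fun i => - (c (size B))^-1 * c i); rewrite lincombZ.
  move/eqP: eq0; rewrite addr_eq0 => /eqP ->.
  by rewrite scalerN scaleNr opprK scalerA mulVf // scale1r.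
move: eq0; rewrite c_last scale0r addr0 => eq0 i.
by rewrite size_rcons ltnS leq_eqVlt => /orP[/eqP -> // | /(freeB c eq0)].
Qed.

Lemma exists_spanning_extension (s : seq A) B : lin_indep B ->
  exists e, lin_indep (B ++ e) /\ forall x, x \in s -> in_span (B ++ e) x.
Proof.
elim: s B => [|x s IHs] B freeB; first by exists [::]; rewrite cats0.
case: (classic (in_span B x)) => [span_x | Nspan_x].
  have [e [freeBe span_s]] := IHs B freeB; exists e; split=> // y.
  by rewrite inE => /predU1P[-> |/span_s //]; apply: in_span_cat.
have [e [freeBe span_s]] := IHs _ (lin_indep_rcons freeB Nspan_x).
exists (x :: e); rewrite -cat_rcons; split=> // y.
rewrite inE => /predU1P[-> |/span_s //]; apply: in_span_cat.
by have := @in_span_nth (rcons B x) (size B); rewrite nth_rcons ltnn eqxx size_rcons; apply.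
Qed.

Lemma exists_lin_indep n : infinite_dim A -> exists a, size a = n /\ lin_indep a.
Proof.
move=> infA; elim: n => [|n [a [size_a free_a]]]; first by exists [::].
have [x Nspan_x] : exists x, ~ in_span a x.
  apply: not_all_ex_not => span_a; apply: infA; exists a => x.
  have [c ->] := span_a x; exists (mkseq c (size a)).
  by rewrite /lincomb; apply: eq_bigr => i _; rewrite nth_mkseq.
exists (rcons a x); split; first by rewrite size_rcons size_a.
exact: lin_indep_rcons.
Qed.

(* Unspecified outside the span of [B]; 0 at indices beyond [size B]. *)
Definition coord B x i : k :=
  if (i < size B)%N then epsilon (inhabits (fun=> 0)) (fun c => x = lincomb c B) i
  else 0.

Lemma coordP B x : in_span B x -> x = lincomb (coord B x) B.
Proof.
move=> span_x; rewrite {1}(epsilon_spec (inhabits (fun=> 0)) _ span_x).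
by apply: eq_bigr => i _; rewrite /coord ltn_ord.
Qed.

Lemma coord_lincomb B c i : lin_indep B ->
  coord B (lincomb c B) i = if (i < size B)%N then c i else 0.
Proof.
move=> freeB; have eq_c := lincomb_inj freeB (coordP (ex_intro _ c erefl)).
by case: ifP => [/eq_c -> | ge_i]; rewrite // /coord ge_i.
Qed.

Lemma coordD B x y i : lin_indep B -> in_span B x -> in_span B y ->
  coord B (x + y) i = coord B x i + coord B y i.
Proof.
move=> freeB span_x span_y.
rewrite {1}(coordP span_x) {1}(coordP span_y) -lincombD coord_lincomb //.
by case: ifP => // ge_i; rewrite /coord ge_i addr0.
Qed.

Lemma coordZ B d x i : lin_indep B -> in_span B x ->
  coord B (d *: x) i = d * coord B x i.
Proof.
move=> freeB span_x; rewrite {1}(coordP span_x) -lincombZ coord_lincomb //.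
by case: ifP => // ge_i; rewrite /coord ge_i mulr0.
Qed.

Lemma coord_nth B i j : lin_indep B -> (i < size B)%N ->
  coord B B`_i j = (j == i)%:R.
Proof.
move=> freeB lt_i; rewrite -{1}(lincomb_delta lt_i) coord_lincomb //.
by case: ltnP => // ge_j; rewrite gtn_eqF // (leq_trans lt_i).
Qed.

Lemma exists_dual_forms (a s : seq A) : lin_indep a ->
  exists f : nat -> A -> k,
    [/\ forall l i, (l < size a)%N -> (i < size a)%N -> f l a`_i = (i == l)%:R,
         forall l, {in s &, forall x y, f l (x + y) = f l x + f l y} &
         forall l d, {in s, forall x, f l (d *: x) = d * f l x}].
Proof.
move=> free_a; have [e [free_ae span_s]] := exists_spanning_extension s free_a.
have size_ae : (size a <= size (a ++ e))%N by rewrite size_cat leq_addr.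
exists (fun l x => coord (a ++ e) x l); split.
- move=> l i lt_l lt_i; have <- : (a ++ e)`_i = a`_i by rewrite nth_cat lt_i.
  by rewrite coord_nth 1?eq_sym // (leq_trans lt_i).
- by move=> l x y /span_s span_x /span_s span_y; apply: coordD.
- by move=> l d x /span_s span_x; apply: coordZ.
Qed.

End LinearCombinations.

Section ProductForms.
Variables (k : fieldType) (A : lmodType k).
Implicit Types (ph : key A -> k) (t : fsum A).

Definition eval_fsum ph t : k := \sum_(q <- t) q.1 * ph q.2.

Lemma eval_fsum_coeff ph t (X : seq (key A)) :
  uniq X -> {subset [seq q.2 | q <- t] <= X} ->
  eval_fsum ph t = \sum_(x <- X) coeff t x * ph x.
Proof.
move=> uniq_X sub_X; under [RHS]eq_bigr do rewrite mulr_suml.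
rewrite exchange_big; apply: eq_big_seq => q q_t.
rewrite (bigD1_seq q.2) ?sub_X ?map_f //= eqxx big1 ?addr0 // => x.
by rewrite eq_sym => /negbTE ->; rewrite mul0r.
Qed.

Lemma eval_fsum_span ph t (gs : seq (k * fsum A)) :
  (forall x, coeff t x = \sum_(g <- gs) g.1 * coeff g.2 x) ->
  eval_fsum ph t = \sum_(g <- gs) g.1 * eval_fsum ph g.2.
Proof.
move=> coeff_t.
pose X := undup ([seq q.2 | q <- t] ++ flatten [seq [seq q.2 | q <- g.2] | g <- gs]).
have uniq_X : uniq X := undup_uniq _.
rewrite (@eval_fsum_coeff _ _ X) => [|//|x x_t]; last first.
  by rewrite mem_undup mem_cat x_t.
under eq_bigr do rewrite coeff_t mulr_suml.
rewrite exchange_big; apply: eq_big_seq => g g_gs.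
rewrite (@eval_fsum_coeff _ _ X) => [|//|x x_g]; last first.
  by rewrite mem_undup mem_cat; apply/orP; right; apply/flatten_mapP; exists g.
by rewrite mulr_sumr; apply: eq_bigr => x _; rewrite mulrA.
Qed.

Lemma eval_fsum_dpowS_monomial ph n (m : seq A) :
  eval_fsum ph (dpowS n [:: (1, m)]) = eval_fsum ph (dpow n m).
Proof. by rewrite /dpowS /= cats0 /eval_fsum big_map; under eq_bigr do rewrite mul1r. Qed.

Definition prod_form (f : nat -> A -> k) (n : nat) (x : key A) : k :=
  if (x.1 == [::]) && (size x.2 == n) then \prod_(l < n) f l x.2`_l else 0.

Lemma prod_form_rcons f n m w y :
  prod_form f n.+1 (m, rcons w y) = prod_form f n (m, w) * f n y.
Proof.
rewrite /prod_form /= size_rcons eqSS.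
case: ifP => [/andP[_ /eqP size_w] | _]; last by rewrite mul0r.
rewrite big_ord_recr /= nth_rcons size_w ltnn eqxx; congr (_ * _).
by apply: eq_bigr => l _; rewrite nth_rcons size_w ltn_ord.
Qed.

Lemma eval_prod_form_dpow_succ f n m :
  eval_fsum (prod_form f n.+1) (dpow n.+1 m) =
  \sum_(i <- iota 0 (size m))
     f n m`_i * eval_fsum (prod_form f n) (dpow n (drop_at m i)).
Proof.
rewrite /eval_fsum [dpow _.+1 _]/= big_flatten /= big_map.
apply: eq_bigr => i _; rewrite big_map mulr_sumr.
by apply: eq_bigr => -[c [x w]] _; rewrite prod_form_rcons mulrA mulrC.
Qed.

(* Of the orderings of [a] produced by \partial^{size a}, only the one deleting
   the factors from last to first survives. *)
Lemma eval_prod_form_dpow_dual f (a : seq A) :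
  (forall l i, (l < size a)%N -> (i < size a)%N -> f l a`_i = (i == l)%:R) ->
  eval_fsum (prod_form f (size a)) (dpow (size a) a) = 1.
Proof.
move=> f_dual.
suff dual_take j : (j <= size a)%N ->
    eval_fsum (prod_form f j) (dpow j (take j a)) = 1.
  by have := dual_take _ (leqnn (size a)); rewrite take_size.
elim: j => [|j IHj] le_j.
  by rewrite /eval_fsum big_seq1 /prod_form /= take0 big_ord0 mul1r.
rewrite eval_prod_form_dpow_succ size_takel // -/(index_iota 0 j.+1) big_nat_recr //=.
rewrite big1_seq ?add0r => [|i /andP[_]]; last first.
  rewrite mem_index_iota => /andP[_ lt_ij].
  have lt_i : (i < size a)%N := ltn_trans lt_ij le_j.
  by rewrite nth_take ?f_dual ?(ltn_eqF lt_ij) ?mul0r // ltnW.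
rewrite nth_take // f_dual // eqxx mul1r /drop_at take_takel // drop_oversize.
  by rewrite cats0 IHj // ltnW.
by rewrite size_takel.
Qed.

Definition fsum_entries (t : fsum A) : seq A := flatten [seq q.2.1 ++ q.2.2 | q <- t].

Lemma cat_cons_set_nth (u v : seq A) x : u ++ x :: v = set_nth 0 (u ++ 0 :: v) (size u) x.
Proof. by elim: u => //= y u ->. Qed.

Lemma prod_cat_cons (f : nat -> A -> k) n (u v : seq A) x (lt_u : (size u < n)%N) :
  \prod_(l < n) f l (u ++ x :: v)`_l =
  f (size u) x * \prod_(l < n | l != Ordinal lt_u) f l (u ++ 0 :: v)`_l.
Proof.
rewrite cat_cons_set_nth (bigD1 (Ordinal lt_u)) //= nth_set_nth /= eqxx.
congr (_ * _); apply: eq_bigr => l; rewrite -val_eqE /= => /negbTE ne_l.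
by rewrite nth_set_nth /= ne_l.
Qed.

Lemma eval_prod_form_rel (f : nat -> A -> k) n (s : seq A) g : tensor_rel g ->
  (forall l, {in s &, forall x y, f l (x + y) = f l x + f l y}) ->
  (forall l d, {in s, forall x, f l (d *: x) = d * f l x}) ->
  {subset fsum_entries g <= s} -> eval_fsum (prod_form f n) g = 0.
Proof.
move=> rel_g f_add f_scale sub_s.
have cat_cons_nil (u v : seq A) x : (u ++ x :: v == [::]) = false by case: u.
case: g / rel_g sub_s => [u v w a b|u v w d a|u v w a b|m u v a b|m u v d a] sub_s;
  rewrite /eval_fsum !big_cons big_nil /prod_form /= ?cat_cons_nil ?mulr0 ?addr0 //;
  rewrite !size_cat /=; case: ifP => [/andP[_ /eqP size_n]|_]; rewrite ?mulr0 ?addr0 //;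
  have lt_u : (size u < n)%N by rewrite -size_n addnS ltnS leq_addr.
- have [a_s b_s] : a \in s /\ b \in s.
    by split; apply: sub_s; rewrite /fsum_entries /= !mem_cat !inE eqxx !orbT.
  by rewrite !(prod_cat_cons _ _ _ lt_u) f_add //; ring.
- have a_s : a \in s.
    by apply: sub_s; rewrite /fsum_entries /= !mem_cat !inE eqxx !orbT.
  by rewrite !(prod_cat_cons _ _ _ lt_u) f_scale //; ring.
Qed.

End ProductForms.

Theorem proposition7p8 (k : fieldType) (p : nat) (hp : prime p)
  (hchar : p \in [pchar k]) (A : lmodType k) (hA : infinite_dim A) (r : nat) :
  ~ (forall t : sym_elt A, S_le r t).
Proof.
move=> all_S_le.
have [a [size_a free_a]] := exists_lin_indep r.+1 hA.
have [gs [gs_rel coeff_dpow_a]] := all_S_le [:: (1, a)].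
have [f [f_dual f_add f_scale]] :=
  exists_dual_forms (flatten [seq fsum_entries g.2 | g <- gs]) free_a.
have := eval_fsum_span (prod_form f r.+1) coeff_dpow_a.
rewrite eval_fsum_dpowS_monomial -size_a eval_prod_form_dpow_dual //.
rewrite big1_seq => [/eqP|g /andP[_ g_gs]]; first by rewrite oner_eq0.
rewrite (eval_prod_form_rel _ (gs_rel g g_gs) f_add f_scale) ?mulr0 // => x x_g.
by apply/flatten_mapP; exists g.
Qed.
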